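(* Let $Y\subseteq\hat I_\tau$ be nonempty and suppose $p\nmid a_Y$. Then there is a rational interior point $\vartheta$ of $F_Y$ such that $p\nmid m$, where $m$ is the minimal positive multiple of $r$ with $\frac mr\vartheta\in X_*(T_{\mathrm{ad}})^\tau$.
   Context: $p$ is a prime (the characteristic of an algebraically closed field $\mathrm k$). $G$ is a connected simple algebraic group with maximal torus $T$, $T_{\mathrm{ad}}$ the image of $T$ in the adjoint group; $\tau$ a diagram automorphism of order $r$. $\hat I_\tau=I_\tau\sqcup\{o\}$ is the vertex set of the affine Dynkin diagram of the twisted loop group $G(\mathrm k((z)))^\tau$, $I_\tau$ the $\tau$-orbits of vertices of the diagram of $G$; $(a_i)_{i\in\hat I_\tau}$ the Kac labels ($a_o=1$); $X_*(T_{\mathrm{ad}})^\tau=\bigoplus_{i\in I_\tau}\mathbb Z\check\omega_i$, $\check\omega_o:=0$. The fundamental alcove in $X_*(T)^\tau_{\mathbb R}$ is the simplex with vertices $\check\omega_i/a_i$, $i\in\hat I_\tau$; $F_Y$ is its facet spanned by $\{\check\omega_i/a_i:i\in Y\}$; $a_Y=r\cdot\gcd\{a_i:i\in Y\}$. *)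

From HB Require Import structures.
From mathcomp Require Import all_boot all_order all_algebra.
Set Implicit Arguments. Unset Strict Implicit. Unset Printing Implicit Defensive.
Import Order.TTheory GRing.Theory Num.Theory.
Local Open Scope ring_scope.

(* Vertex set \hat I_tau = T (a finType) with distinguished vertex o; I_tau = T \ {o}.
   Vectors of X_*(T)^tau_Q are represented by their coordinates in the basis
   (coweight i)_{i in I_tau} of X_*(T_ad)^tau; a vector is a function T -> rat whose
   o-coordinate is ignored (it is always 0 for the vectors built below). *)

Definition coweight (T : finType) (o i : T) : T -> rat :=
  fun j => if (i != o) && (j == i) then 1 else 0.

Definition in_coweight_lattice (T : finType) (o : T) (v : T -> rat) : Prop :=
  forall i, i != o -> v i \is a Num.int.

Definition alcove_vertex (T : finType) (o : T) (a : T -> nat) (i : T) : T -> rat :=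
  fun j => (a i)%:R^-1 * coweight o i j.

Definition facet_interior_point (T : finType) (o : T) (a : T -> nat)
    (Y : {set T}) (th : T -> rat) : Prop :=
  exists t : T -> rat,
    [/\ forall i, i \in Y -> 0 < t i,
        \sum_(i in Y) t i = 1
      & forall j, th j = \sum_(i in Y) t i * alcove_vertex o a i j].

Definition minimal_lattice_multiple (T : finType) (o : T) (r : nat)
    (th : T -> rat) (m : nat) : Prop :=
  [/\ (0 < m)%N, (r %| m)%N,
      in_coweight_lattice o (fun j => (m %/ r)%:R * th j)
    & forall m', (0 < m')%N -> (r %| m')%N ->
        in_coweight_lattice o (fun j => (m' %/ r)%:R * th j) -> (m <= m')%N].

Definition aY (T : finType) (r : nat) (a : T -> nat) (Y : {set T}) : nat :=
  (r * \big[gcdn/0%N]_(i in Y) a i)%N.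

From mathcomp Require Import all_boot all_order all_algebra.
From mathcomp Require Import ring.
Set Implicit Arguments. Unset Strict Implicit. Unset Printing Implicit Defensive.
Import Order.TTheory GRing.Theory Num.Theory.
Local Open Scope ring_scope.

(* Since p does not divide a_Y, p does not divide r and p does not divide
   a_{i0} for some i0 in Y.  Put S := sum_{i in Y, i <> i0} a_i and choose
   N > S prime to p (e.g. N = pS + 1).  The barycentric weights a_i/N for
   i <> i0 and 1 - S/N for i0 give an interior point of F_Y whose coordinates
   1/N and (N - S)/(N a_{i0}) become integral after scaling by N a_{i0}.  The
   integral scalings of a point form an ideal of Z, so the minimal multiple
   is m = r k with k dividing N a_{i0}, and p divides none of r, N, a_{i0}. *)

Lemma ndvdn_aY (p r : nat) (T : finType) (a : T -> nat) (Y : {set T}) :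
  ~~ (p %| aY r a Y)%N -> ~~ (p %| r)%N /\ exists2 i, i \in Y & ~~ (p %| a i)%N.
Proof.
move=> p_aY; split; first by apply: contra p_aY => p_r; rewrite dvdn_mulr.
apply/exists_inP; apply: contraR p_aY => /exists_inPn p_a.
by rewrite dvdn_mull //; apply/dvdn_biggcdP => i /p_a; rewrite negbK.
Qed.

Section LatticeMultiple.

Variables (T : finType) (o : T) (th : T -> rat).

Definition lattice_scaling (k : nat) : bool :=
  [forall j, (j != o) ==> ((k%:R * th j) \is a Num.int)].

Lemma lattice_scalingP k :
  reflect (in_coweight_lattice o (fun j => k%:R * th j)) (lattice_scaling k).
Proof.
apply: (iffP forallP) => [L j jo | L j]; first by have /implyP := L j; apply.
by apply/implyP; apply: L.
Qed.

Lemma lattice_scaling_modn k D :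
  lattice_scaling k -> lattice_scaling D -> lattice_scaling (D %% k).
Proof.
move=> /lattice_scalingP Lk /lattice_scalingP LD; apply/lattice_scalingP => j jo.
have -> : (D %% k)%:R = D%:R - (D %/ k)%:R * k%:R :> rat.
  by rewrite {2}(divn_eq D k) natrD natrM addrC addKr.
by rewrite mulrBl -mulrA rpredB ?LD // rpredM ?natr_int ?Lk.
Qed.

Lemma minimal_lattice_multiple_dvd r D :
  (0 < r)%N -> (0 < D)%N -> lattice_scaling D ->
  exists k, minimal_lattice_multiple o r th (r * k) /\ (k %| D)%N.
Proof.
move=> r_gt0 D_gt0 LD.
have exL : exists k, (0 < k)%N && lattice_scaling k by exists D; rewrite D_gt0.
case: (ex_minnP exL) => k /andP [k_gt0 Lk] k_min.
have kD : (k %| D)%N.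
  apply: contraT; rewrite /dvdn -lt0n => mod_gt0.
  have := k_min _ (introT andP (conj mod_gt0 (lattice_scaling_modn Lk LD))).
  by rewrite leqNgt ltn_mod k_gt0.
exists k; split=> //; split; rewrite ?muln_gt0 ?r_gt0 ?dvdn_mulr ?mulKn //.
  exact/lattice_scalingP.
move=> m' m'_gt0 /dvdnP [k' def_m']; move: m'_gt0.
rewrite def_m' mulnK // mulnC muln_gt0 => /andP [_ k'_gt0] /lattice_scalingP Lk'.
by rewrite leq_mul2l k_min ?orbT // k'_gt0 Lk'.
Qed.

End LatticeMultiple.

Section FacetPoint.

Variables (T : finType) (o : T) (a : T -> nat) (Y : {set T}).

Definition barycenter (t : T -> rat) (j : T) : rat :=
  \sum_(i in Y) t i * alcove_vertex o a i j.

Lemma barycenterE t j :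
  j != o -> barycenter t j = if j \in Y then t j / (a j)%:R else 0.
Proof.
move=> jo; rewrite /barycenter big_mkcond (bigD1 j) //= big1 ?addr0.
  by rewrite /alcove_vertex /coweight eqxx jo mulr1; case: ifP.
move=> i ij; rewrite /alcove_vertex /coweight (eq_sym j) (negbTE ij) andbF.
by rewrite !mulr0; case: ifP.
Qed.

Hypothesis a_gt0 : forall i, (0 < a i)%N.
Variables (i0 : T) (N : nat).
Hypothesis i0Y : i0 \in Y.
Hypothesis sum_lt : (\sum_(i in Y | i != i0) a i < N)%N.

Let S := (\sum_(i in Y | i != i0) a i)%N.

Definition facet_weight (i : T) : rat :=
  if i == i0 then 1 - S%:R / N%:R else (a i)%:R / N%:R.

Let N_neq0 : (N%:R : rat) != 0.
Proof. by rewrite pnatr_eq0 -lt0n (leq_ltn_trans _ sum_lt). Qed.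

Let a_neq0 i : ((a i)%:R : rat) != 0.
Proof. by rewrite pnatr_eq0 -lt0n. Qed.

Lemma facet_weight_gt0 i : 0 < facet_weight i.
Proof.
have N_gt0 : (0 < N)%N by rewrite lt0n -(pnatr_eq0 rat).
rewrite /facet_weight; case: ifP => _; last by rewrite divr_gt0 ?ltr0n.
by rewrite subr_gt0 ltr_pdivrMr ?ltr0n // mul1r ltr_nat.
Qed.

Lemma facet_weight_sum : \sum_(i in Y) facet_weight i = 1.
Proof.
rewrite (bigD1 i0) //= {1}/facet_weight eqxx.
rewrite (eq_bigr (fun i => (a i)%:R / N%:R)) => [|i /andP [_ /negbTE i_i0]].
  by rewrite -mulr_suml -natr_sum subrK.
by rewrite /facet_weight i_i0.
Qed.

Lemma facet_point_interior : facet_interior_point o a Y (barycenter facet_weight).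
Proof.
by exists facet_weight; split=> [i _||//]; rewrite ?facet_weight_gt0 ?facet_weight_sum.
Qed.

Lemma facet_point_integral :
  lattice_scaling o (barycenter facet_weight) (N * a i0).
Proof.
apply/lattice_scalingP => j jo; rewrite barycenterE //.
case: ifP => _; last by rewrite mulr0.
rewrite /facet_weight natrM; case: ifP => [/eqP -> | _].
  have -> : (N%:R * (a i0)%:R) * ((1 - S%:R / N%:R) / (a i0)%:R)
            = N%:R - S%:R :> rat by field; apply/andP.
  by rewrite rpredB ?natr_int.
have -> : (N%:R * (a i0)%:R) * ((a j)%:R / N%:R / (a j)%:R) = (a i0)%:R :> rat.
  by field; apply/andP.
exact: natr_int.
Qed.

End FacetPoint.

Theorem lemma2p6 (p : nat) (T : finType) (o : T) (a : T -> nat) (r : nat)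
    (Y : {set T}) :
  prime p -> (0 < r)%N -> (forall i, (0 < a i)%N) -> a o = 1%N ->
  Y != set0 -> ~~ (p %| aY r a Y)%N ->
  exists th : T -> rat,
    facet_interior_point o a Y th /\
    exists m : nat, minimal_lattice_multiple o r th m /\ ~~ (p %| m)%N.
Proof.
move=> p_pr r_gt0 a_gt0 _ _ /ndvdn_aY [p_r [i0 i0Y p_ai0]].
set S := (\sum_(i in Y | i != i0) a i)%N; set M := (p * S).+1.
have S_lt_M : (S < M)%N by rewrite ltnS leq_pmull ?prime_gt0.
have p_M : ~~ (p %| M)%N.
  by rewrite /M -addn1 dvdn_addr ?dvdn_mulr // dvdn1 gtn_eqF ?prime_gt1.
set th := barycenter o a Y (facet_weight a Y i0 M).
have D_gt0 : (0 < M * a i0)%N by rewrite muln_gt0 a_gt0.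
have LD := facet_point_integral o a_gt0 S_lt_M.
have [k [k_min kD]] := minimal_lattice_multiple_dvd r_gt0 D_gt0 LD.
exists th; split; first exact: facet_point_interior.
exists (r * k)%N; split=> //; rewrite Euclid_dvdM // negb_or p_r /=.
have p_D : ~~ (p %| M * a i0)%N by rewrite Euclid_dvdM // negb_or p_M.
by apply: contra p_D => /dvdn_trans; apply.
Qed.
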